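(* Let $m\ge 2$ be even and $n$ a multiple of $m$. Every set $S\subseteq\{0,1\}^n$ of mutually incomparable solutions with respect to $m$-COCZ satisfies $|S|\le(n/m+1)^{m/2}$. Moreover, a Pareto-optimal set of $m$-COCZ consisting of mutually incomparable solutions (one solution for each Pareto-optimal fitness vector) is a set of mutually incomparable solutions of maximum cardinality, and its cardinality is exactly $(n/m+1)^{m/2}$.
   Context: $m$-COCZ: $\{0,1\}^n\to\mathbb N_0^m$, $f_k(x)=\sum_{i=1}^{n/2}x_i+g_k(x)$, where the second half $x_{n/2+1},\dots,x_n$ is split into $m/2$ consecutive blocks of length $n/m$, and for block $b\in[m/2]$, $g_{2b-1}(x)$ is the number of ones and $g_{2b}(x)$ the number of zeros in block $b$. All objectives are maximized. $x\succeq y$ iff $f_j(x)\ge f_j(y)$ for all $j$; $x,y$ are incomparable if neither $x\succeq y$ nor $y\succeq x$; $S$ is a set of mutually incomparable solutions if any two distinct elements of $S$ are incomparable. A point is Pareto-optimal if no other point dominates it. *)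

From mathcomp Require Import all_boot all_order.

(* A solution is a bit string x in {0,1}^n, represented as {ffun 'I_n -> bool}.
   Positions and objectives are 0-indexed: position i in 'I_n is x_{i+1},
   objective k in 'I_m is f_{k+1}. *)
Notation bits n := {ffun 'I_n -> bool}.

Definition first_half (n : nat) (x : bits n) : nat :=
  \sum_(i < n | i < n %/ 2) x i.

Definition in_block (n m b : nat) (i : 'I_n) : bool :=
  (n %/ 2 + b * (n %/ m) <= i) && (i < n %/ 2 + b.+1 * (n %/ m)).

(* g_{k+1}: for 0-indexed k = 2b (i.e. g_{2(b+1)-1}) the number of ones in
   block b; for k = 2b+1 (i.e. g_{2(b+1)}) the number of zeros in block b *)
Definition g (n m : nat) (x : bits n) (k : 'I_m) : nat :=
  if odd k then \sum_(i < n | in_block n m k./2 i) ~~ x i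
  else \sum_(i < n | in_block n m k./2 i) x i.

Definition cocz (n m : nat) (x : bits n) (k : 'I_m) : nat :=
  first_half n x + g n m x k.

Definition wdom (n m : nat) (x y : bits n) : Prop :=
  forall k : 'I_m, cocz n m y k <= cocz n m x k.

Definition incomparable (n m : nat) (x y : bits n) : Prop :=
  ~ wdom n m x y /\ ~ wdom n m y x.

Definition mutually_incomparable (n m : nat) (S : {set bits n}) : Prop :=
  forall x y, x \in S -> y \in S -> x != y -> incomparable n m x y.

Definition same_fitness (n m : nat) (x y : bits n) : Prop :=
  forall k : 'I_m, cocz n m x k = cocz n m y k.

Definition sdom (n m : nat) (x y : bits n) : Prop :=
  wdom n m x y /\ ~ same_fitness n m x y.

Definition pareto_optimal (n m : nat) (x : bits n) : Prop :=
  forall y : bits n, ~ sdom n m y x.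

Definition pareto_set (n m : nat) (S : {set bits n}) : Prop :=
  (forall x, x \in S -> pareto_optimal n m x) /\
  (forall y : bits n, pareto_optimal n m y ->
     exists2 x, x \in S & same_fitness n m x y).

From mathcomp Require Import all_boot all_order.
From mathcomp Require Import zify.

(* Write m = 2h and n = L m, and call profile of x the numbers of ones in the
   h blocks of its second half.  The sum of the two objectives of a block is
   twice the first-half count plus L, so weak dominance never decreases the
   first-half count, and when that count is equal it forces equal profiles.
   Hence two points with the same profile are comparable (the one with more
   ones in its first half dominates), and a mutually incomparable set injects
   into the (L+1)^h profiles.  Conversely, a point with an all-ones first half
   is Pareto-optimal whatever its profile, so a Pareto set realises every
   profile. *)

Set Implicit Arguments.
Unset Strict Implicit.
Unset Printing Implicit Defensive.

Lemma sum_window_ltn n a c v : a <= c -> c <= n ->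
  \sum_(i < n | (a <= i) && (i < c)) ((i < a + v) : nat) = minn v (c - a).
Proof.
move=> le_ac le_cn.
rewrite -(big_mkord (fun i => (a <= i) && (i < c)) (fun i => nat_of_bool (i < a + v))).
suff -> : forall k, \sum_(0 <= i < k | (a <= i) && (i < c)) ((i < a + v) : nat)
   = minn (minn c k) (a + v) - a by lia.
elim=> [|k IHk]; first by rewrite big_geq //; lia.
rewrite big_mkcond big_nat_recr //= -big_mkcond IHk.
by have [?|?] := leqP a k; have [?|?] := ltnP k c;
  have [?|?] := ltnP k (a + v); rewrite /=; lia.
Qed.

Lemma first_half_le n (x : bits n) : first_half n x <= n %/ 2.
Proof.
rewrite /first_half (eq_bigl (fun i : 'I_n => (0 <= i) && (i < n %/ 2))) //.
apply: (@leq_trans (\sum_(i < n | (0 <= i) && (i < n %/ 2)) ((i < 0 + n %/ 2) : nat))).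
  by apply: leq_sum => i /andP[_ lt_i]; rewrite add0n lt_i; case: (x i).
by rewrite sum_window_ltn ?leq_div //; lia.
Qed.

Section COCZ.

Variables m n h L : nat.
Hypotheses (h_gt0 : 0 < h) (def_m : m = h * 2) (def_n : n = L * m).

Definition block_ones b (x : bits n) : nat :=
  \sum_(i < n | in_block n m b i) nat_of_bool (x i).

Definition block_zeros b (x : bits n) : nat :=
  \sum_(i < n | in_block n m b i) nat_of_bool (~~ x i).

Lemma divn_m : n %/ m = L.
Proof. by rewrite def_n mulnK // def_m; lia. Qed.

Lemma half_n : n %/ 2 = h * L.
Proof. by rewrite def_n def_m mulnA mulnK // mulnC. Qed.

Lemma half_obj_lt (k : 'I_m) : k./2 < h.
Proof. by rewrite ltn_half_double -muln2 -def_m. Qed.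

Lemma in_blockE b (i : 'I_n) :
  in_block n m b i = (h * L + b * L <= i) && (i < h * L + b * L + L).
Proof. by rewrite /in_block divn_m half_n mulSn; congr (_ && _); apply/idP/idP; lia. Qed.

Lemma in_block_inj b b' (i : 'I_n) :
  in_block n m b i -> in_block n m b' i -> b = b'.
Proof.
rewrite !in_blockE => /andP[? ?] /andP[? ?].
have : b * L <= i - h * L < b * L + L by lia.
have : b' * L <= i - h * L < b' * L + L by lia.
by move: (i - h * L) => j; nia.
Qed.

Lemma block_ones_le b (x : bits n) : b < h -> block_ones b x <= L.
Proof.
move=> lt_bh; rewrite /block_ones; under eq_bigl do rewrite in_blockE.
apply: (@leq_trans (\sum_(i < n | (h * L + b * L <= i) && (i < h * L + b * L + L))
     ((i < h * L + b * L + L) : nat))).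
  by apply: leq_sum => i /andP[_ ->]; case: (x i).
have le_n : h * L + b * L + L <= n by rewrite def_n def_m; nia.
by rewrite sum_window_ltn ?leq_addr //; lia.
Qed.

Lemma block_zerosE b (x : bits n) : b < h -> block_zeros b x = L - block_ones b x.
Proof.
move=> lt_bh; suff: block_ones b x + block_zeros b x = L by lia.
rewrite /block_ones /block_zeros -big_split /=; under eq_bigl do rewrite in_blockE.
rewrite (eq_bigr (fun i : 'I_n => nat_of_bool (i < h * L + b * L + L))).
  have le_n : h * L + b * L + L <= n by rewrite def_n def_m; nia.
  by rewrite sum_window_ltn ?leq_addr //; lia.
by move=> i /andP[_ ->]; case: (x i).
Qed.

Lemma coczE (x : bits n) (k : 'I_m) :
  cocz n m x k = first_half n x +
     (if odd k then L - block_ones k./2 x else block_ones k./2 x).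
Proof.
rewrite /cocz /g; case: ifP => _ //.
by rewrite -block_zerosE ?half_obj_lt.
Qed.

Lemma wdom_first_half (x y : bits n) :
  wdom n m x y -> first_half n y <= first_half n x.
Proof.
have m_gt0 : 0 < m by lia.
have m_gt1 : 1 < m by lia.
move=> xy; have := xy (Ordinal m_gt0); have := xy (Ordinal m_gt1); rewrite !coczE /=.
by have := block_ones_le x h_gt0; have := block_ones_le y h_gt0; lia.
Qed.

Lemma wdom_block_ones (x y : bits n) b : b < h ->
  wdom n m x y -> first_half n x = first_half n y -> block_ones b x = block_ones b y.
Proof.
move=> lt_bh xy eq_xy.
have even_lt : b * 2 < m by lia.
have odd_lt : (b * 2).+1 < m by lia.
have := xy (Ordinal even_lt); have := xy (Ordinal odd_lt); rewrite !coczE /=.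
rewrite muln2 uphalf_double doubleK odd_double /=.
by have := block_ones_le x lt_bh; have := block_ones_le y lt_bh; lia.
Qed.

Lemma same_block_ones_wdom (x y : bits n) :
  (forall b, b < h -> block_ones b x = block_ones b y) ->
  first_half n y <= first_half n x -> wdom n m x y.
Proof. by move=> eq_ones le_xy k; rewrite !coczE eq_ones ?half_obj_lt //; lia. Qed.

Definition profile (x : bits n) : {ffun 'I_h -> 'I_L.+1} :=
  [ffun b : 'I_h => inord (block_ones b x)].

Lemma profileE (x : bits n) (b : 'I_h) : val (profile x b) = block_ones b x.
Proof. by rewrite ffunE /= inordK // ltnS block_ones_le. Qed.

Lemma eq_profile (x y : bits n) :
  (profile x = profile y) <-> (forall b, b < h -> block_ones b x = block_ones b y).
Proof.
split=> [eq_xy b lt_bh | eq_ones].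
  by rewrite -(profileE x (Ordinal lt_bh)) -(profileE y (Ordinal lt_bh)) eq_xy.
by apply/ffunP => b; apply: val_inj; rewrite !profileE eq_ones.
Qed.

Lemma profile_comparable (x y : bits n) :
  profile x = profile y -> wdom n m x y \/ wdom n m y x.
Proof.
move/eq_profile => eq_ones.
have [le_yx | /ltnW le_xy] := leqP (first_half n y) (first_half n x).
  by left; apply: same_block_ones_wdom.
by right; apply: same_block_ones_wdom => // b lt_bh; rewrite eq_ones.
Qed.

Lemma mutually_incomparable_profile_inj (S : {set bits n}) :
  mutually_incomparable n m S -> {in S &, injective profile}.
Proof.
move=> incS x y xS yS eq_xy; apply/eqP/negPn/negP => neq_xy.
have [not_xy not_yx] := incS x y xS yS neq_xy.
by case: (profile_comparable eq_xy).
Qed.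

Lemma card_mutually_incomparable (S : {set bits n}) :
  mutually_incomparable n m S -> #|S| <= L.+1 ^ h.
Proof.
move=> incS; rewrite -(card_in_imset (mutually_incomparable_profile_inj incS)).
by apply: leq_trans (max_card _) _; rewrite card_ffun !card_ord.
Qed.

Lemma same_fitness_profile (x y : bits n) :
  same_fitness n m x y -> profile x = profile y.
Proof.
move=> eq_xy.
have xy : wdom n m x y by move=> k; rewrite eq_xy.
have yx : wdom n m y x by move=> k; rewrite eq_xy.
have eq_half : first_half n x = first_half n y.
  by apply/eqP; rewrite eqn_leq !wdom_first_half.
by apply/eq_profile => b lt_bh; apply: wdom_block_ones.
Qed.

Definition profile_witness (v : {ffun 'I_h -> 'I_L.+1}) : bits n :=
  [ffun i : 'I_n => (i < n %/ 2) ||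
     [exists b : 'I_h, in_block n m b i && (i < h * L + b * L + v b)]].

Lemma first_half_witness v : first_half n (profile_witness v) = h * L.
Proof.
rewrite /first_half (eq_bigl (fun i : 'I_n => (0 <= i) && (i < n %/ 2))) //.
rewrite (eq_bigr (fun i : 'I_n => nat_of_bool (i < 0 + n %/ 2))).
  by rewrite sum_window_ltn // half_n; lia.
by move=> i /andP[_ lt_i]; rewrite ffunE add0n lt_i.
Qed.

Lemma profile_witnessK v : profile (profile_witness v) = v.
Proof.
apply/ffunP => b; apply: val_inj; rewrite profileE /block_ones.
rewrite (eq_bigr (fun i : 'I_n => nat_of_bool (i < h * L + b * L + v b))).
  have le_n : h * L + b * L + L <= n by have := ltn_ord b; rewrite def_n def_m; nia.
  under eq_bigl do rewrite in_blockE.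
  by rewrite sum_window_ltn ?leq_addr // addKn; apply/minn_idPl; rewrite -ltnS.
move=> i ib; rewrite ffunE.
have -> : (i < n %/ 2) = false by move: ib; rewrite in_blockE half_n; lia.
congr nat_of_bool; apply/existsP/idP => [[b' /andP[ib' lt_i]] | lt_i].
  by rewrite -(val_inj (in_block_inj ib' ib)).
by exists b; rewrite ib.
Qed.

Lemma profile_witness_pareto v : pareto_optimal n m (profile_witness v).
Proof.
move=> z [zy not_same]; apply: not_same.
have eq_half : first_half n z = first_half n (profile_witness v).
  have := wdom_first_half zy; have := first_half_le z.
  by rewrite first_half_witness half_n; lia.
by move=> k; rewrite !coczE eq_half (wdom_block_ones (half_obj_lt k) zy eq_half).
Qed.

Lemma pareto_set_profile_surj (S : {set bits n}) :
  pareto_set n m S -> profile @: S = setT.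
Proof.
move=> [_ coverS]; apply/setP => v; rewrite inE.
have [x xS same_x] := coverS _ (profile_witness_pareto (v := v)).
by apply/imsetP; exists x; rewrite // (same_fitness_profile same_x) profile_witnessK.
Qed.

Lemma card_pareto_set (S : {set bits n}) :
  pareto_set n m S -> mutually_incomparable n m S -> #|S| = L.+1 ^ h.
Proof.
move=> paretoS incS.
rewrite -(card_in_imset (mutually_incomparable_profile_inj incS)).
by rewrite pareto_set_profile_surj // cardsT card_ffun !card_ord.
Qed.

End COCZ.

Theorem mainTheorem8 (m n : nat) :
  2 <= m -> ~~ odd m -> m %| n ->
  (forall S : {set bits n}, mutually_incomparable n m S ->
     #|S| <= (n %/ m + 1) ^ (m %/ 2)) /\
  (forall S : {set bits n}, pareto_set n m S -> mutually_incomparable n m S ->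
     (forall T : {set bits n}, mutually_incomparable n m T -> #|T| <= #|S|) /\
     #|S| = (n %/ m + 1) ^ (m %/ 2)).
Proof.
move=> m_ge2 even_m dvd_mn.
have def_m : m = m %/ 2 * 2 by rewrite divnK // dvdn2.
have def_n : n = n %/ m * m by rewrite divnK.
have h_gt0 : 0 < m %/ 2 by lia.
have card_incomparable := card_mutually_incomparable h_gt0 def_m def_n.
rewrite addn1; split=> // S paretoS incS.
have cardS := card_pareto_set h_gt0 def_m def_n paretoS incS.
by split=> // T /card_incomparable; rewrite cardS.
Qed.
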